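(* Assume the setting below. For every $i\in\mathbb{N}$ let $Y_i,Y_i'\subseteq X_i\setminus\{o\}$ be non-empty disjoint subsets, let $\mathcal{Y}=\prod_{i\ge1}Y_i$, $\mathcal{Y}'=\prod_{i\ge1}Y_i'$ (with the product topology of the discrete finite sets), and let $m_j$ denote the maximal order of an element of $A_j$. Suppose that for every $n\in\mathbb{N}$ there is some $j$ with \[|Y_j|\,|Y_j'|>n\,m_j\,(|Y_j|+|Y_j'|).\] Then the set of shrinking pairs $(\alpha,\beta)$ is dense in $\mathcal{Y}\times\mathcal{Y}'$.
   Context: Setting: $Q,G$ are groups and $X=(X_n)_{n\in\mathbb{N}}$ is a sequence of finite sets with $|X_n|\ge2$, each with actions of $Q$ and $G$; $Q_n,G_n\subseteq\mathrm{Sym}(X_n)$ are the images and $A_n=\langle Q_n,G_n\rangle$. Assume for all $n$: (A1) $G,Q$ finitely generated; (A2) $Q$ perfect; (A3) $A_n$ is transitive on $X_n$ and generated by the $G_n$-conjugates of $Q_n$. $\mathcal{T}_j$ is the rooted tree of finite words $x_j\cdots x_k$ ($x_i\in X_i$), $\mathrm{Aut}(\mathcal{T}_j)$ its root-fixing automorphisms; sections $h|_u\in\mathrm{Aut}(\mathcal{T}_{j+\ell})$ (for $u$ of level $\ell$) are defined by $h(uv)=h(u)h|_u(v)$. $A_j$ acts by rooted automorphisms $a\cdot x_jx_{j+1}\cdots x_k=(ax_j)x_{j+1}\cdots x_k$ and is identified with its image; $q_j,g_j$ denote images of $q\in Q,g\in G$ in $A_j$. A point $o\in X_i$ is fixed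 in each $X_i$; $\mathcal{S}=\prod_{i\ge1}(X_i\setminus\{o\})$. For $\alpha\in\mathcal{S}$, $q\in Q$, $\tilde q^\alpha_{[j]}\in\mathrm{Aut}(\mathcal{T}_j)$ acts trivially on the first level with section at $x\in X_j$ equal to $\tilde q^\alpha_{[j+1]}$ if $x=o$, $q_{j+1}$ if $x=\alpha_j$, identity otherwise; analogously $\tilde g^\beta_{[j]}$ for $\beta\in\mathcal{S}$, $g\in G$. $\tilde Q^\alpha_{[j]},\tilde G^\beta_{[j]}$ are the sets of these elements, $\Gamma_j^{\alpha,\beta}=\langle A_j,\tilde Q^\alpha_{[j]},\tilde G^\beta_{[j]}\rangle$, and $\tilde B^{\alpha,\beta}_j=\tilde Q^\alpha_{[j]}\tilde G^\beta_{[j]}$. Stabilized sections: for $g\in\mathrm{Aut}(\mathcal{T}_j)$ and a vertex $u$, $\ell_u(g)$ is the length of the orbit of $u$ under $\langle g\rangle$ and $g\Vert_u=g^{\ell_u(g)}|_u$. A pair $(\alpha,\beta)\in\mathcal{S}^2$ is shrinking if $\alpha_j\ne\beta_j$ for all $j$ and for each $\gamma\in\Gamma_1^{\alpha,\beta}$ there is $k\in\mathbb{N}$ such that for every vertex $x$ of level $k$ of $\mathcal{T}_1$, $\gamma\Vert_x$ lies in $\tilde B^{\alpha,\beta}_{k+1}$ or in $A_{k+1}$. *)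

(* Indexing convention: the paper's
   levels i = 1,2,3,... are represented by the natural numbers 0,1,2,...
   (paper index i  <->  Rocq index i-1). *)
From HB Require Import structures.
From mathcomp Require Import all_boot all_fingroup.
From mathcomp Require Import boolp.

Unset Printing Implicit Defensive.

Local Open Scope group_scope.

Inductive ggen (gT : groupType) (S : gT -> Prop) : gT -> Prop :=
  | ggen_in x : S x -> ggen gT S x
  | ggen_one : ggen gT S 1
  | ggen_mul x y : ggen gT S x -> ggen gT S y -> ggen gT S (x * y)
  | ggen_inv x : ggen gT S x -> ggen gT S x^-1.
Arguments ggen {gT} S x.

Definition finitely_generated (gT : groupType) : Prop :=
  exists s : seq gT, forall x : gT, ggen (fun y => y \in s) x.

Definition perfect_group (gT : groupType) : Prop :=
  forall x : gT, ggen (fun y => exists a b : gT, y = [~ a, b]) x.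

Definition is_left_action (gT : groupType) (T : finType)
    (rho : gT -> {perm T}) : Prop :=
  (forall t : T, rho 1 t = t) /\
  (forall (p q : gT) (t : T), rho (p * q) t = rho p (rho q t)).
Arguments is_left_action {gT T} rho.

Definition image_set (gT : groupType) (T : finType) (rho : gT -> {perm T})
  : {set {perm T}} := [set s | `[< exists q : gT, rho q = s >]].
Arguments image_set {gT T} rho.

Section Tree.

Variable X : nat -> finType.

(* words x_j x_{j+1} ... x_{j+l-1} : vertices of level l of T_j *)
Fixpoint word (j l : nat) {struct l} : finType :=
  match l with
  | 0 => unit
  | l'.+1 => (X j * word j.+1 l')%type
  end.

(* the index of the tree T_{j+l} in which sections at level l live *)
Fixpoint lev (j l : nat) {struct l} : nat :=
  match l with 0 => j | l'.+1 => lev j.+1 l' end.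

Fixpoint wcat (l : nat) : forall (j m : nat),
    word j l -> word (lev j l) m -> word j (l + m) :=
  match l return forall (j m : nat),
      word j l -> word (lev j l) m -> word j (l + m) with
  | 0 => fun j m _ v => v
  | l'.+1 => fun j m u v => (u.1, wcat l' j.+1 m u.2 v)
  end.

(* (raw) maps of T_j acting levelwise; automorphisms of T_j are among them *)
Definition aut (j : nat) := forall l : nat, word j l -> word j l.

Definition aone (j : nat) : aut j := fun l w => w.
Definition amul (j : nat) (g h : aut j) : aut j := fun l w => g l (h l w).
Definition ainv (j : nat) (g : aut j) : aut j := fun l w => finv (g l) w.
Definition apow (j : nat) (g : aut j) (n : nat) : aut j :=
  fun l w => iter n (g l) w.

Inductive agen (j : nat) (S : aut j -> Prop) : aut j -> Prop :=
  | agen_in g : S g -> @agen j S g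
  | agen_one : @agen j S (@aone j)
  | agen_mul g h : @agen j S g -> @agen j S h -> @agen j S (amul j g h)
  | agen_inv g : @agen j S g -> @agen j S (ainv j g).

Definition rooted (j : nat) (a : {perm X j}) : aut j :=
  fun l => match l return word j l -> word j l with
           | 0 => fun w => w
           | l'.+1 => fun w => (a w.1, w.2)
           end.


Variable o : forall n, X n.

(* tilde p^alpha_[j] where p n is the image in A_n of a fixed group element *)
Fixpoint tilde_rec (p : forall n, {perm X n}) (alpha : forall n, X n)
    (l : nat) : forall j, word j l -> word j l :=
  match l return forall j, word j l -> word j l with
  | 0 => fun j w => w
  | l'.+1 => fun j w =>
      if w.1 == o j then (w.1, tilde_rec p alpha l' j.+1 w.2)
      else if w.1 == alpha j then (w.1, rooted j.+1 (p j.+1) l' w.2)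
      else w
  end.

Definition tilde (p : forall n, {perm X n}) (alpha : forall n, X n)
    (j : nat) : aut j := fun l => tilde_rec p alpha l j.

Definition is_section (j l : nat) (h : aut j) (u : word j l)
    (f : aut (lev j l)) : Prop :=
  forall (m : nat) (v : word (lev j l) m),
    h (l + m) (wcat l j m u v) = wcat l j m (h l u) (f m v).

Definition orbit_len (j l : nat) (g : aut j) (u : word j l) : nat :=
  fingraph.order (g l) u.

Definition stab_section_in (j l : nat) (g : aut j) (u : word j l)
    (P : aut (lev j l) -> Prop) : Prop :=
  exists f, P f /\ is_section j l (apow j g (orbit_len j l g u)) u f.

End Tree.

Arguments wcat {X l j m} u v.
Arguments aone {X j} l w.
Arguments amul {X j} g h l w.
Arguments ainv {X j} g l w.
Arguments apow {X j} g n l w.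
Arguments agen {X j} S g.
Arguments rooted {X j} a l w.
Arguments tilde {X} o p alpha j l w.
Arguments is_section {X j l} h u f.
Arguments orbit_len {X j l} g u.
Arguments stab_section_in {X j l} g u P.


Section Setting.

Variables (Q G : groupType) (X : nat -> finType).
Variables (rhoQ : forall n, Q -> {perm X n}) (rhoG : forall n, G -> {perm X n}).
Variable o : forall n, X n.

Definition Qn (n : nat) : {set {perm X n}} := image_set (rhoQ n).
Definition Gn (n : nat) : {set {perm X n}} := image_set (rhoG n).
Definition An (n : nat) : {set {perm X n}} := <<Qn n :|: Gn n>>.

Definition max_order (j : nat) : nat := \max_(a in An j) #[a].

Definition qtilde (alpha : forall n, X n) (q : Q) (j : nat) : aut X j :=
  tilde o (fun n => rhoQ n q) alpha j.
Definition gtilde (beta : forall n, X n) (g : G) (j : nat) : aut X j :=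
  tilde o (fun n => rhoG n g) beta j.

Definition Gamma (alpha beta : forall n, X n) (j : nat) : aut X j -> Prop :=
  agen (fun f => (exists a, a \in An j /\ f = rooted a) \/
                 (exists q : Q, f = qtilde alpha q j) \/
                 (exists g : G, f = gtilde beta g j)).

Definition Btilde (alpha beta : forall n, X n) (j : nat) (f : aut X j) : Prop :=
  exists (q : Q) (g : G), f = amul (qtilde alpha q j) (gtilde beta g j).

(* the paper's T_1 is T_0 here; sections at level k live in T_{lev 0 k}
   (= the paper's T_{k+1}) *)
Definition shrinking (alpha beta : forall n, X n) : Prop :=
  (forall j, alpha j != beta j) /\
  forall gamma : aut X 0, Gamma alpha beta 0 gamma ->
    exists k : nat, forall x : word X 0 k,
      stab_section_in gamma x
        (fun f => Btilde alpha beta (lev 0 k) f \/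
                  exists a, a \in An (lev 0 k) /\ f = rooted a).

End Setting.

Arguments Qn {Q X} rhoQ n.
Arguments Gn {G X} rhoG n.
Arguments An {Q G X} rhoQ rhoG n.
Arguments max_order {Q G X} rhoQ rhoG j.
Arguments qtilde {Q X} rhoQ o alpha q j l _.
Arguments gtilde {G X} rhoG o beta g j l _.
Arguments Gamma {Q G X} rhoQ rhoG o alpha beta j _.
Arguments Btilde {Q G X} rhoQ rhoG o alpha beta j f.
Arguments shrinking {Q G X} rhoQ rhoG o alpha beta.

(* Every element of Gamma is spelled by a word over countably many letters: rooted
   permutations of the first level and the finitely many generators of Q and G with
   their inverses.  For such a word of length r, a stabilized section at level L+1 can
   fall outside B~ and A only if a single orbit of the word passes, letter by letter,
   both through o^(L+1) and through o^L alpha_L (or o^L beta_L).  For each of the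
   (r+1)^2 pairs of letter positions, the y such that o^L y is reached from the orbit
   through o^(L+1) form one cycle of a permutation in A_L, so at most (r+1)^2 m_L
   values of alpha_L, beta_L are bad, and this bad set depends on alpha, beta only
   below level L.  The growth hypothesis provides levels L beyond any bound where
   Y_L and Y'_L are larger than that, so handling the words one after the other at
   increasing levels, while keeping any finite prefix, yields a shrinking pair. *)

From Pilot Require Import Defs.
From mathcomp Require Import all_boot all_fingroup.
From mathcomp Require Import boolp.
From mathcomp Require Import zify.

Set Implicit Arguments.
Unset Strict Implicit.
Unset Printing Implicit Defensive.

(** * A diagonal construction *)

Definition agree_below (Z : nat -> Type) (L : nat) (z z' : forall n, Z n) : Prop :=
  forall n, n < L -> z n = z' n.

Section Update.

Variables (Z : nat -> Type) (z : forall n, Z n) (L : nat) (v : Z L).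

Definition update : forall n, Z n :=
  fun n => if L =P n is ReflectT e then ecast n (Z n) e v else z n.

Lemma update_eq : update L = v.
Proof. by rewrite /update; case: eqP => // e; rewrite (eq_irrelevance e (erefl L)). Qed.

Lemma update_neq n : n != L -> update n = z n.
Proof. by rewrite /update eq_sym; case: eqP. Qed.

End Update.

Section Diagonal.

Variables (Z : nat -> Type) (adm : forall n, Z n -> Prop).
Variable R : nat -> (forall n, Z n) -> Prop.
Variables (next_level : nat -> nat -> (forall n, Z n) -> nat)
          (next_value : forall t M z, Z (next_level t M z)).
Hypothesis next_level_gt : forall t M z, M < next_level t M z.
Hypothesis next_value_adm : forall t M z, adm (next_value t M z).
Hypothesis next_value_meets : forall t M z z', (forall n, adm (z' n)) ->
  agree_below (next_level t M z) z z' -> z' (next_level t M z) = next_value t M z ->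
  R t z'.
Variables (z0 : forall n, Z n) (N : nat).
Hypothesis z0_adm : forall n, adm (z0 n).

(* [stage t] pairs the lower bound for the level of step [t] with the sequence after [t] steps. *)
Fixpoint stage (t : nat) : nat * (forall n, Z n) :=
  if t is t'.+1 then
    (next_level t' (stage t').1 (stage t').2,
     update (stage t').2 (next_value t' (stage t').1 (stage t').2))
  else (N, z0).

Definition level t := next_level t (stage t).1 (stage t).2.

Definition state t := (stage t).2.

Lemma level_lt t : level t < level t.+1.
Proof. exact: next_level_gt. Qed.

Lemma level_gt t : t + N < level t.
Proof.
elim: t => [|t IHt]; first exact: next_level_gt.
exact: leq_ltn_trans IHt (level_lt t).
Qed.

Lemma level_mono : {homo level : t t' / t <= t'}.
Proof. exact: homo_leq leq_trans (fun t => ltnW (level_lt t)). Qed.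

Lemma state_adm t n : adm (state t n).
Proof.
elim: t n => [|t IHt] n //=; rewrite /state /=.
have [->|n_neq] := eqVneq n (level t); first by rewrite update_eq; exact: next_value_adm.
by rewrite update_neq //; exact: IHt.
Qed.

Lemma state_stable t d n : n < level t -> state (t + d) n = state t n.
Proof.
move=> n_lt; elim: d => [|d IHd]; first by rewrite addn0.
rewrite addnS /state /= update_neq; first exact: IHd.
by rewrite neq_ltn (leq_trans n_lt) ?level_mono ?leq_addr.
Qed.

Definition limit n := state n.+1 n.

Lemma limit_agree t n : n < level t -> limit n = state t n.
Proof.
move=> n_lt; rewrite /limit; case: (leqP t n.+1) => [t_le | n_lt_t].
  by rewrite -(subnKC t_le) state_stable.
rewrite -(subnKC (ltnW n_lt_t)) state_stable //.
by have := level_gt n.+1; lia.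
Qed.

Lemma diagonal_limit :
  [/\ forall n, adm (limit n), agree_below N z0 limit & forall t, R t limit].
Proof.
split=> [n | n n_lt | t]; first exact: state_adm.
  rewrite (limit_agree (t := 0)) //; exact: leq_trans n_lt (ltnW (level_gt 0)).
have lim_next n : n <= level t -> limit n = state t.+1 n.
  by move=> n_le; apply: limit_agree; apply: leq_ltn_trans n_le (level_lt t).
apply: (next_value_meets (t := t) (M := (stage t).1) (z := (stage t).2)) => [n | n n_lt |].
- exact: state_adm.
- by rewrite lim_next 1?ltnW // /state /= update_neq // ltn_eqF.
- by rewrite lim_next // /state /= update_eq.
Qed.

End Diagonal.

Lemma diagonalization (I : countType) (Z : nat -> Type) (adm : forall n, Z n -> Prop)
    (R : I -> (forall n, Z n) -> Prop) (z0 : forall n, Z n) (N : nat) :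
  (forall n, adm n (z0 n)) ->
  (forall i M (z : forall n, Z n), exists L, M < L /\ exists2 v : Z L, adm L v &
     forall z', (forall n, adm n (z' n)) -> agree_below L z z' -> z' L = v -> R i z') ->
  exists z, [/\ forall n, adm n (z n), agree_below N z0 z & forall i, R i z].
Proof.
move=> z0_adm extend.
pose R' t z := if @unpickle I t is Some i then R i z else True.
have : forall tMz : nat * nat * (forall n, Z n), exists Lv : {L : nat & Z L},
    tMz.1.2 < projT1 Lv /\ adm _ (projT2 Lv) /\
    forall z', (forall n, adm n (z' n)) -> agree_below (projT1 Lv) tMz.2 z' ->
      z' (projT1 Lv) = projT2 Lv -> R' tMz.1.1 z'.
  move=> [[t M] z]; rewrite /R' /=; case: (unpickle t) => [i|].
    by have [L [M_lt [v adm_v meets]]] := extend i M z; exists (existT _ L v).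
  by exists (existT _ M.+1 (z0 M.+1)).
case/choice=> next next_spec.
pose nl t M z := projT1 (next (t, M, z)).
pose nv t M z : Z (nl t M z) := projT2 (next (t, M, z)).
have [adm_lim agree_lim R_lim] := @diagonal_limit Z adm R' nl nv
  (fun t M z => (next_spec (t, M, z)).1) (fun t M z => (next_spec (t, M, z)).2.1)
  (fun t M z => (next_spec (t, M, z)).2.2) z0 N z0_adm.
exists (limit nv z0 N); split=> // i.
by have := R_lim (pickle i); rewrite /R' pickleK.
Qed.

Lemma exists_notin_of_card (T : finType) (A B : {set T}) :
  #|B| < #|A| -> exists2 y, y \in A & y \notin B.
Proof. by move=> BA; apply/subsetPn; apply: contraTN BA => /subset_leq_card; rewrite -leqNgt. Qed.

Lemma card_bigcup_leq (I T : finType) (A : I -> {set T}) :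
  #|\bigcup_i A i| <= \sum_i #|A i|.
Proof.
apply: (big_ind2 (fun (U : {set T}) n => #|U| <= n)) => // [|U m V n Um Vn].
  by rewrite cards0.
exact: leq_trans (leq_card_setU U V) (leq_add Um Vn).
Qed.

Lemma order_dvdn_iter (T : finType) (f : T -> T) x n :
  injective f -> iter n f x = x -> fingraph.order f x %| n.
Proof.
move=> f_inj fnx; set l := fingraph.order f x.
have l_gt0 : 0 < l := fingraph.order_gt0 f x.
have iter_ml k : iter (k * l) f x = x.
  by elim: k => [|k IHk] //; rewrite mulSn iterD IHk iter_order.
have rx : iter (n %% l) f x = x.
  by rewrite -{2}fnx {2}(divn_eq n l) addnC iterD iter_ml.
by have := findex_iter (ltn_pmod n l_gt0); rewrite rx findex0 /dvdn => <-.
Qed.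

Section Growth.

Variables (m a b : nat -> nat).
Hypothesis m_gt0 : forall j, 0 < m j.
Hypothesis growth : forall n, exists j, n * m j * (a j + b j) < a j * b j.

Lemma growth_beyond n M : exists2 j, M < j & n * m j * (a j + b j) < a j * b j.
Proof.
set S := \sum_(i < M.+1) a i * b i.
have [j grow_j] := growth (n + S).
exists j; last by apply: leq_ltn_trans grow_j; rewrite !leq_mul2r leq_addr !orbT.
rewrite ltnNge; apply/negP => j_le.
have abS : a j * b j <= S.
  by rewrite /S (bigD1 (Ordinal (j_le : j < M.+1))) //= leq_addr.
have ab_gt0 : 0 < a j + b j.
  rewrite lt0n; apply: contraTneq grow_j => /eqP; rewrite addn_eq0 => /andP[/eqP-> _].
  by rewrite mul0n ltn0.
have Sab : S <= (n + S) * m j * (a j + b j).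
  by rewrite -mulnA (leq_trans (leq_addl n S)) // leq_pmulr // muln_gt0 m_gt0.
by have := leq_ltn_trans (leq_trans abS Sab) grow_j; rewrite ltnn.
Qed.

End Growth.

Lemma growth_split k x y : k * (x + y) < x * y -> k < x /\ k < y.
Proof. by move=> h; split; nia. Qed.

(** * Group words over a generating sequence *)

Section GroupWords.

Variables (gT : groupType) (s : seq gT).
Local Open Scope group_scope.

Definition gword_letter (ib : nat * bool) : gT :=
  if ib.2 then (nth 1 s ib.1)^-1 else nth 1 s ib.1.

Definition gword (ls : seq (nat * bool)) : gT := foldr (fun ib x => gword_letter ib * x) 1 ls.

Definition flip_letter (ib : nat * bool) : nat * bool := (ib.1, ~~ ib.2).

Lemma gword_letter_flip ib : gword_letter (flip_letter ib) = (gword_letter ib)^-1.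
Proof. by case: ib => i []; rewrite /gword_letter /= ?invgK. Qed.

Lemma gword_cat ls ls' : gword (ls ++ ls') = gword ls * gword ls'.
Proof. by elim: ls => [|ib ls IHls] /=; rewrite ?mul1g // IHls mulgA. Qed.

Lemma gword_rev_flip ls : gword (rev (map flip_letter ls)) = (gword ls)^-1.
Proof.
elim: ls => [|ib ls IHls] /=; first by rewrite invg1.
by rewrite rev_cons -cats1 gword_cat IHls /= mulg1 gword_letter_flip invMg.
Qed.

Lemma ggen_gword x : ggen (fun y => y \in s) x -> exists ls, x = gword ls.
Proof.
elim=> [y y_in | | y z _ [ls ->] _ [ls' ->] | y _ [ls ->]].
- by exists [:: (index y s, false)]; rewrite /= /gword_letter /= nth_index // mulg1.
- by exists [::].
- by exists (ls ++ ls'); rewrite gword_cat.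
- by exists (rev (map flip_letter ls)); rewrite gword_rev_flip.
Qed.

End GroupWords.

(** * Vertices and tilde automorphisms *)

Section TreeWords.

Variable X : nat -> finType.

Lemma aut_ext j (f g : Defs.aut X j) : (forall l w, f l w = g l w) -> f = g.
Proof.
move=> fg; apply: functional_extensionality_dep => l.
exact: functional_extensionality_dep (fg l).
Qed.

Lemma levE j l : lev j l = j + l.
Proof. by elim: l j => [|l IHl] j /=; rewrite ?addn0 // IHl addSnnS. Qed.

Fixpoint wrcons (l : nat) : forall j, word X j l -> X (lev j l) -> word X j l.+1 :=
  match l return forall j, word X j l -> X (lev j l) -> word X j l.+1 with
  | 0 => fun j _ y => (y, tt)
  | l'.+1 => fun j v y => (v.1, wrcons v.2 y)
  end.

Lemma wrcons_inj l j (v v' : word X j l) y y' :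
  wrcons v y = wrcons v' y' -> v = v' /\ y = y'.
Proof.
elim: l j v v' y y' => [|l IHl] j v v' y y' /=; first by case: v; case: v' => -[->].
by case: v v' => x v [x' v'] [-> /IHl[-> ->]].
Qed.

Lemma rooted1 j l (w : word X j l) : rooted 1%g l w = w.
Proof. by case: l w => [|l] //= [x w]; rewrite perm1. Qed.

Lemma rootedM j (a b : {perm X j}) l (w : word X j l) :
  rooted a l (rooted b l w) = rooted (b * a)%g l w.
Proof. by case: l w => [|l] //= [x w]; rewrite permM. Qed.

Variable o : forall n, X n.

Fixpoint oword (l : nat) : forall j, word X j l :=
  match l return forall j, word X j l with
  | 0 => fun _ => tt
  | l'.+1 => fun j => (o j, oword l' j.+1)
  end.

Implicit Types (p : forall n, {perm X n}) (al be : forall n, X n).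

Lemma tilde_rec_id p al l j (w : word X j l) :
  (forall n t, p n t = t) -> tilde_rec X o p al l j w = w.
Proof.
move=> p1; elim: l j w => [//|l IHl] j [x w] /=.
case: ifP => _; first by rewrite IHl.
case: ifP => _ //; have -> : p j.+1 = 1%g by apply/permP => t; rewrite p1 perm1.
by rewrite rooted1.
Qed.

Lemma tilde_recS p al l j x (w : word X j.+1 l) :
  tilde_rec X o p al l.+1 j ((x, w) : word X j l.+1) =
  (x, if x == o j then tilde_rec X o p al l j.+1 w
      else if x == al j then rooted (p j.+1) l w else w).
Proof. by rewrite /=; case: ifP => //; case: ifP. Qed.

Lemma tilde_rec_comp p p' p'' al l j (w : word X j l) :
  (forall n t, p'' n t = p n (p' n t)) ->
  tilde_rec X o p al l j (tilde_rec X o p' al l j w) = tilde_rec X o p'' al l j w.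
Proof.
move=> pE; elim: l j w => [//|l IHl] j [x w]; rewrite !tilde_recS.
case: (x == o j); first by rewrite IHl.
case: (x == al j) => //; rewrite rootedM.
by have -> : (p' j.+1 * p j.+1)%g = p'' j.+1 by apply/permP => t; rewrite permM pE.
Qed.

Lemma tilde_rec_comm p p' al be l j (w : word X j l) : (forall n, al n != be n) ->
  tilde_rec X o p al l j (tilde_rec X o p' be l j w) =
  tilde_rec X o p' be l j (tilde_rec X o p al l j w).
Proof.
move=> al_be; elim: l j w => [//|l IHl] j [x w]; rewrite !tilde_recS.
case: (x == o j); first by rewrite IHl.
have [->|_] := eqVneq x (al j); first by rewrite (negbTE (al_be j)).
by case: (x == be j).
Qed.

Lemma tilde_rec_local p al al' l j (w : word X j l) :
  (forall i, i.+1 < j + l -> al i = al' i) ->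
  tilde_rec X o p al l j w = tilde_rec X o p al' l j w.
Proof.
elim: l j w => [//|l IHl] j [x w] al_al'; rewrite !tilde_recS IHl => [|i i_lt]; last first.
  by apply: al_al'; lia.
case: l {IHl} al_al' w => [|l] al_al' w; last by rewrite al_al' //; lia.
by case: (x == o j); case: (x == al j); case: (x == al' j).
Qed.

End TreeWords.

(** * Symbols for the generators of Gamma and their sections *)

Section Generators.

Variables (Q G : groupType) (X : nat -> finType).
Variables (rhoQ : forall n, Q -> {perm X n}) (rhoG : forall n, G -> {perm X n}).
Variables (o alpha beta : forall n, X n).

Local Notation A := (An rhoQ rhoG).

(* Unlike the automorphisms they denote, these symbols have computable sections. *)
Inductive gen (j : nat) : Type := GenRoot of {perm X j} | GenQ of Q | GenG of G.
Arguments GenRoot {j}.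
Arguments GenQ {j}.
Arguments GenG {j}.

Definition gen_aut j (s : gen j) : Defs.aut X j :=
  match s with
  | GenRoot a => rooted a
  | GenQ q => qtilde rhoQ o alpha q j
  | GenG g => gtilde rhoG o beta g j
  end.
Arguments gen_aut {j} s l _.

Definition gen_perm j (s : gen j) : {perm X j} := if s is GenRoot a then a else 1%g.

Definition gen_child j (s : gen j) (x : X j) : gen j.+1 :=
  match s with
  | GenRoot _ => GenRoot 1%g
  | GenQ q => if x == o j then GenQ q
              else GenRoot (if x == alpha j then rhoQ j.+1 q else 1%g)
  | GenG g => if x == o j then GenG g
              else GenRoot (if x == beta j then rhoG j.+1 g else 1%g)
  end.

Fixpoint gen_section l : forall j, gen j -> word X j l -> gen (lev j l) :=
  match l return forall j, gen j -> word X j l -> gen (lev j l) with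
  | 0 => fun j s _ => s
  | l'.+1 => fun j s v => gen_section (gen_child s v.1) v.2
  end.
Arguments gen_section : simpl never.

Lemma gen_sectionS l j (s : gen j) x (v : word X j.+1 l) :
  gen_section s ((x, v) : word X j l.+1) = gen_section (gen_child s x) v.
Proof. by []. Qed.

Lemma gen_autS j (s : gen j) l x (w : word X j.+1 l) :
  gen_aut s l.+1 ((x, w) : word X j l.+1) = (gen_perm s x, gen_aut (gen_child s x) l w).
Proof.
case: s => [a|q|g] /=; first by rewrite rooted1.
  rewrite /qtilde /tilde tilde_recS perm1.
  by case: (x == o j) => //; case: (x == alpha j); rewrite /= ?rooted1.
rewrite /gtilde /tilde tilde_recS perm1.
by case: (x == o j) => //; case: (x == beta j); rewrite /= ?rooted1.
Qed.

Lemma gen_aut_wcat l j (s : gen j) m (v : word X j l) (w : word X (lev j l) m) :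
  gen_aut s (l + m) (wcat v w) = wcat (gen_aut s l v) (gen_aut (gen_section s v) m w).
Proof.
elim: l j s v w => [//|l IHl] j s [x v] w /=.
by rewrite (gen_autS s x (wcat v w)) IHl (gen_autS s x v).
Qed.

Lemma gen_aut_wrcons l j (s : gen j) (v : word X j l) (y : X (lev j l)) :
  gen_aut s l.+1 (wrcons v y) = wrcons (gen_aut s l v) (gen_perm (gen_section s v) y).
Proof.
elim: l j s v y => [|l IHl] j s v y.
  by case: v; rewrite /= (gen_autS (l := 0) s y tt); case: (gen_aut _ 0 tt).
case: v => x v /=.
by rewrite (gen_autS s x (wrcons v y)) IHl (gen_autS s x v).
Qed.

Definition word_aut j (ws : seq (gen j)) : Defs.aut X j :=
  foldr (fun s f => amul (gen_aut s) f) aone ws.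
Arguments word_aut {j} ws l _.

Fixpoint word_section j l (ws : seq (gen j)) (v : word X j l) : seq (gen (lev j l)) :=
  if ws is s :: ws' then gen_section s (word_aut ws' l v) :: word_section ws' v
  else [::].

Definition word_perm j (ws : seq (gen j)) : {perm X j} :=
  foldr (fun s p => p * gen_perm s)%g 1%g ws.

Lemma word_aut_cat j (ws ws' : seq (gen j)) l w :
  word_aut (ws ++ ws') l w = word_aut ws l (word_aut ws' l w).
Proof. by elim: ws => [|s ws IHws] //=; rewrite /amul IHws. Qed.

Lemma word_section_cat j l (ws ws' : seq (gen j)) (v : word X j l) :
  word_section (ws ++ ws') v = word_section ws (word_aut ws' l v) ++ word_section ws' v.
Proof. by elim: ws => [|s ws IHws] //=; rewrite IHws word_aut_cat. Qed.

Lemma word_aut_nseq j (ws : seq (gen j)) n l w :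
  word_aut (flatten (nseq n ws)) l w = iter n (word_aut ws l) w.
Proof. by elim: n => [|n IHn] //=; rewrite word_aut_cat IHn. Qed.

Lemma word_aut_wcat j (ws : seq (gen j)) l m (v : word X j l) (w : word X (lev j l) m) :
  word_aut ws (l + m) (wcat v w) = wcat (word_aut ws l v) (word_aut (word_section ws v) m w).
Proof. by elim: ws => [|s ws IHws] //=; rewrite /amul IHws gen_aut_wcat. Qed.

Lemma word_aut_wrcons j (ws : seq (gen j)) l (v : word X j l) (y : X (lev j l)) :
  word_aut ws l.+1 (wrcons v y) = wrcons (word_aut ws l v) (word_perm (word_section ws v) y).
Proof.
elim: ws => [|s ws IHws] /=; first by rewrite perm1.
by rewrite /amul IHws gen_aut_wrcons permM.
Qed.

Lemma rhoQ_in_A n q : rhoQ n q \in A n.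
Proof. by apply: mem_gen; apply/setUP; left; rewrite inE; apply/asboolP; exists q. Qed.

Lemma rhoG_in_A n g : rhoG n g \in A n.
Proof. by apply: mem_gen; apply/setUP; right; rewrite inE; apply/asboolP; exists g. Qed.

Lemma order_le_max_order n (a : {perm X n}) : a \in A n -> #[a]%g <= max_order rhoQ rhoG n.
Proof. exact: leq_bigmax_cond. Qed.

Lemma max_order_gt0 n : 0 < max_order rhoQ rhoG n.
Proof. by have := order_le_max_order (group1 (A n)); rewrite order1. Qed.

Hypothesis rhoQ_action : forall n, is_left_action (rhoQ n).
Hypothesis rhoG_action : forall n, is_left_action (rhoG n).

Lemma qtilde1 j : qtilde rhoQ o alpha 1%g j = aone.
Proof. by apply: aut_ext => l w; apply: tilde_rec_id => n t; apply: (rhoQ_action n).1. Qed.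

Lemma gtilde1 j : gtilde rhoG o beta 1%g j = aone.
Proof. by apply: aut_ext => l w; apply: tilde_rec_id => n t; apply: (rhoG_action n).1. Qed.

Lemma qtildeM j q q' :
  amul (qtilde rhoQ o alpha q j) (qtilde rhoQ o alpha q' j) = qtilde rhoQ o alpha (q * q')%g j.
Proof. by apply: aut_ext => l w; apply: tilde_rec_comp => n t; apply: (rhoQ_action n).2. Qed.

Lemma gtildeM j g g' :
  amul (gtilde rhoG o beta g j) (gtilde rhoG o beta g' j) = gtilde rhoG o beta (g * g')%g j.
Proof. by apply: aut_ext => l w; apply: tilde_rec_comp => n t; apply: (rhoG_action n).2. Qed.

Definition gen_inv j (s : gen j) : gen j :=
  match s with
  | GenRoot a => GenRoot a^-1%g
  | GenQ q => GenQ q^-1%g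
  | GenG g => GenG g^-1%g
  end.

Lemma gen_autK j (s : gen j) l : cancel (gen_aut s l) (gen_aut (gen_inv s) l).
Proof.
move=> w; case: s => [a|q|g] /=; first by rewrite rootedM mulgV rooted1.
  by move: (qtildeM j q^-1 q); rewrite mulVg qtilde1 => /(congr1 (fun f : Defs.aut X j => f l w)).
by move: (gtildeM j g^-1 g); rewrite mulVg gtilde1 => /(congr1 (fun f : Defs.aut X j => f l w)).
Qed.

Definition word_inv j (ws : seq (gen j)) : seq (gen j) := rev [seq gen_inv s | s <- ws].

Lemma word_autK j (ws : seq (gen j)) l : cancel (word_aut ws l) (word_aut (word_inv ws) l).
Proof.
move=> w; elim: ws w => [|s ws IHws] w //=.
by rewrite /word_inv /= rev_cons -cats1 word_aut_cat /= /amul gen_autK IHws.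
Qed.

Lemma word_aut_inj j (ws : seq (gen j)) l : injective (word_aut ws l).
Proof. exact: can_inj (word_autK ws (l := l)). Qed.

Lemma ainv_word_aut j (ws : seq (gen j)) : ainv (word_aut ws) = word_aut (word_inv ws).
Proof.
apply: aut_ext => l w; rewrite /ainv.
by rewrite -{2}(f_finv (@word_aut_inj _ ws l) w) word_autK.
Qed.

Definition is_tilde j (s : gen j) : bool := if s is GenRoot _ then false else true.
Definition is_trivial_root j (s : gen j) : bool := if s is GenRoot a then a == 1%g else false.
Definition is_A_root j (s : gen j) : bool := if s is GenRoot a then a \in A j else false.
Arguments is_A_root {j}.

Lemma gen_child_good j (s : gen j) x : is_tilde (gen_child s x) || is_A_root (gen_child s x).
Proof.
case: s => [a|q|g] /=; first exact: group1.
  by case: (x == o j) => //=; case: (x == alpha j); rewrite ?rhoQ_in_A ?group1.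
by case: (x == o j) => //=; case: (x == beta j); rewrite ?rhoG_in_A ?group1.
Qed.

Lemma gen_section_good l j (s : gen j) (v : word X j l.+1) :
  is_tilde (gen_section s v) || is_A_root (gen_section s v).
Proof.
by elim: l j s v => [|l IHl] j s [x v]; rewrite gen_sectionS; [exact: gen_child_good | exact: IHl].
Qed.

Lemma gen_child_root j (s : gen j) x : x != o j -> exists a, gen_child s x = GenRoot a.
Proof. by move=> xo; case: s => [a|q|g] /=; rewrite ?(negbTE xo); eexists. Qed.

Lemma gen_section_rootS l j (a : {perm X j}) (v : word X j l.+1) :
  gen_section (GenRoot a) v = GenRoot 1%g.
Proof. by elim: l j a v => [|l IHl] j a [x v]; rewrite gen_sectionS ?IHl. Qed.

Lemma gen_section_off_oword l j (s : gen j) (v : word X j l.+1) :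
  v != oword o l.+1 j -> ~~ is_tilde (gen_section s v).
Proof.
elim: l j s v => [|l IHl] j s [x v] v_off; rewrite gen_sectionS.
  have xo : x != o j by apply: contra v_off => /eqP->; case: v.
  by have [a ->] := gen_child_root s xo.
have [xo|xo] := eqVneq x (o j).
  by apply: IHl; apply: contra v_off => /eqP->; rewrite xo.
by have [a ->] := gen_child_root s xo; rewrite gen_section_rootS.
Qed.

Lemma gen_section_trivial l j (s : gen j) (v : word X j l.+1) :
  v != wrcons (oword o l j) (alpha (lev j l)) -> v != wrcons (oword o l j) (beta (lev j l)) ->
  is_tilde (gen_section s v) || is_trivial_root (gen_section s v).
Proof.
elim: l j s v => [|l IHl] j s [x v] va vb; rewrite gen_sectionS.
  case: v va vb => va vb.
  have xa : x != alpha j by apply: contra va => /eqP->.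
  have xb : x != beta j by apply: contra vb => /eqP->.
  by case: s => [a|q|g] /=; rewrite ?(negbTE xa) ?(negbTE xb) ?eqxx;
    case: (x == o j); rewrite /= ?eqxx.
have [xo|xo] := eqVneq x (o j).
  by apply: IHl; [apply: contra va | apply: contra vb] => /eqP->; rewrite xo.
by have [a ->] := gen_child_root s xo; rewrite gen_section_rootS /=.
Qed.

Lemma word_perm_section_in_A j l (ws : seq (gen j)) (v : word X j l.+1) :
  word_perm (word_section ws v) \in A (lev j l.+1).
Proof.
elim: ws => [|s ws IHws] /=; first exact: group1.
rewrite groupM //; move: (gen_section_good s (word_aut ws l.+1 v)).
by case: (gen_section s _) => [a|q|g] // _; exact: group1.
Qed.

Definition in_Btilde_or_A j (f : Defs.aut X j) : Prop :=
  Btilde rhoQ rhoG o alpha beta j f \/ exists a, a \in A j /\ f = rooted a.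

Definition sections_shrink (gamma : Defs.aut X 0) : Prop :=
  exists k, forall x : word X 0 k, stab_section_in gamma x (@in_Btilde_or_A (lev 0 k)).

Lemma word_Btilde j (ws : seq (gen j)) : (forall n, alpha n != beta n) ->
  all (fun s => is_tilde s || is_trivial_root s) ws ->
  Btilde rhoQ rhoG o alpha beta j (word_aut ws).
Proof.
move=> al_be; elim: ws => [|s ws IHws] /=.
  by exists 1%g, 1%g; apply: aut_ext => l w; rewrite qtilde1 gtilde1.
case/andP=> s_ok /IHws[q [g ->]].
case: s s_ok => [a /eqP->|q' _|g' _].
- by exists q, g; apply: aut_ext => l w; rewrite /amul /= rooted1.
- by exists (q' * q)%g, g; rewrite -qtildeM.
exists q, (g' * g)%g; rewrite -gtildeM; apply: aut_ext => l w.
by rewrite /amul /= /qtilde /gtilde /tilde [RHS]tilde_rec_comm.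
Qed.

Lemma word_rooted j (ws : seq (gen j)) :
  all is_A_root ws -> exists2 a, a \in A j & word_aut ws = rooted a.
Proof.
elim: ws => [|s ws IHws] /=.
  by exists 1%g; [exact: group1 | apply: aut_ext => l w; rewrite rooted1].
case: s => [b|//|//] /andP[/= b_in /IHws[a a_in ->]].
exists (a * b)%g; first exact: groupM.
by apply: aut_ext => l w; rewrite /amul /= rootedM.
Qed.

(* [v] is a vertex at which a letter of [ws] acts while [x] runs through its
   [word_aut ws]-orbit, i.e. where the letters of a stabilized section of
   [word_aut ws] at [x] are taken. *)
Definition visits j l (ws : seq (gen j)) (x v : word X j l) : Prop :=
  exists e i, i <= size ws /\ word_aut (drop i ws) l (iter e (word_aut ws l) x) = v.

Lemma all_word_section j l (P : pred (gen (lev j l))) (ws : seq (gen j)) (y : word X j l) :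
  (forall s i, i < size ws -> P (gen_section s (word_aut (drop i.+1 ws) l y))) ->
  all P (word_section ws y).
Proof.
elim: ws => [|s ws IHws] //= Ps; apply/andP; split.
  by have := Ps s 0 (ltn0Sn _); rewrite /= drop0.
by apply: IHws => s' i i_lt; exact: (Ps s' i.+1 i_lt).
Qed.

Lemma all_word_section_nseq j l (P : pred (gen (lev j l))) (ws : seq (gen j)) n
    (x : word X j l) :
  (forall s v, visits ws x v -> P (gen_section s v)) ->
  all P (word_section (flatten (nseq n ws)) x).
Proof.
move=> Pvis; elim: n => [|n IHn] //=.
rewrite word_section_cat all_cat IHn andbT word_aut_nseq.
by apply: all_word_section => s i i_lt; apply: Pvis; exists n, i.+1.
Qed.

Lemma stab_section_in_word j l (ws : seq (gen j)) (x : word X j l)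
    (P : Defs.aut X (lev j l) -> Prop) :
  P (word_aut (word_section (flatten (nseq (orbit_len (word_aut ws) x) ws)) x)) ->
  stab_section_in (word_aut ws) x P.
Proof.
move=> Pw; eexists; split; first exact: Pw.
by move=> m v; rewrite /apow -!word_aut_nseq word_aut_wcat.
Qed.

Definition bad_set j L (ws : seq (gen j)) : {set X (lev j L)} :=
  [set y | `[< exists x, visits ws x (oword o L.+1 j) /\
                        visits ws x (wrcons (oword o L j) y) >]].

Lemma word_shrinks_at j L (ws : seq (gen j)) (x : word X j L.+1) :
  (forall n, alpha n != beta n) ->
  alpha (lev j L) \notin bad_set L ws -> beta (lev j L) \notin bad_set L ws ->
  stab_section_in (word_aut ws) x (@in_Btilde_or_A (lev j L.+1)).
Proof.
move=> al_be al_ok be_ok; apply: stab_section_in_word.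
set sec := word_section _ x.
have [x_o | x_off] := pselect (visits ws x (oword o L.+1 j)).
  left; apply: word_Btilde => //; apply: all_word_section_nseq => s v x_v.
  apply: gen_section_trivial; apply/eqP => v_eq.
    by move/negP: al_ok; apply; rewrite inE; apply/asboolP; exists x; rewrite -v_eq.
  by move/negP: be_ok; apply; rewrite inE; apply/asboolP; exists x; rewrite -v_eq.
right; have /word_rooted[a a_in ->] : all is_A_root sec; last by exists a.
apply: all_word_section_nseq => s v x_v.
have v_off : v != oword o L.+1 j by apply: contra_not_neq x_off => <-.
move: (gen_section_good s v) (gen_section_off_oword s v_off).
by case: (gen_section s v).
Qed.

Lemma card_fiber_orbit j l (ws : seq (gen j)) (v : word X j l) (w0 : word X j l.+1) :
  #|[set y | fconnect (word_aut ws l.+1) w0 (wrcons v y)]| <=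
  #[word_perm (word_section (flatten (nseq (fingraph.order (word_aut ws l) v) ws)) v)]%g.
Proof.
set ell := fingraph.order _ v; set phi := word_perm _.
have step y : iter ell (word_aut ws l.+1) (wrcons v y) = wrcons v (phi y).
  by rewrite -word_aut_nseq word_aut_wrcons word_aut_nseq iter_order //; exact: word_aut_inj.
have steps k y : iter (k * ell) (word_aut ws l.+1) (wrcons v y) = wrcons v (iter k phi y).
  by elim: k => [|k IHk] //; rewrite mulSn iterD IHk step.
have [->|[y1]] := set_0Vmem [set y | fconnect (word_aut ws l.+1) w0 (wrcons v y)].
  by rewrite cards0.
rewrite inE => y1_in.
apply: leq_trans (_ : _ <= #|[set (phi ^+ k)%g y1 | k : 'I_(#[phi]%g)]|) _; last first.
  by rewrite (leq_trans (leq_imset_card _ _)) // card_ord.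
apply/subset_leq_card/subsetP => y; rewrite inE => y_in.
have y1y : fconnect (word_aut ws l.+1) (wrcons v y1) (wrcons v y).
  by apply: connect_trans y_in; rewrite fconnect_sym //; exact: word_aut_inj.
have f_eq := iter_findex y1y; set f := findex _ _ _ in f_eq.
have /dvdnP[k f_k] : ell %| f.
  apply: order_dvdn_iter; first exact: word_aut_inj.
  by move: f_eq; rewrite -word_aut_nseq word_aut_wrcons word_aut_nseq => /wrcons_inj[].
move: f_eq; rewrite f_k steps => /wrcons_inj[_ <-].
apply/imsetP; exists (Ordinal (ltn_pmod k (order_gt0 phi))) => //=.
by rewrite expg_mod_order permX.
Qed.

(* All such [wrcons (oword o L j) y], pulled back along [ws2], lie in one
   [word_aut ws]-orbit, which meets the children of a vertex in one cycle of a
   permutation of [A]. *)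
Lemma card_linked j L (ws ws1 ws2 : seq (gen j)) : 0 < L ->
  #|[set y | `[< exists x e e',
       word_aut ws1 L.+1 (iter e (word_aut ws L.+1) x) = oword o L.+1 j /\
       word_aut ws2 L.+1 (iter e' (word_aut ws L.+1) x) = wrcons (oword o L j) y >]]|
  <= max_order rhoQ rhoG (lev j L).
Proof.
move=> L_gt0.
pose psi := word_perm (word_section (word_inv ws2) (oword o L j)).
pose fiber := [set y | fconnect (word_aut ws L.+1)
  (word_aut (word_inv ws1) L.+1 (oword o L.+1 j))
  (wrcons (word_aut (word_inv ws2) L (oword o L j)) y)].
apply: (@leq_trans #|psi @^-1: fiber|).
  apply/subset_leq_card/subsetP => y; rewrite !inE => /asboolP[x [e [e' [x_o x_y]]]].
  rewrite /psi -word_aut_wrcons -x_y -x_o !word_autK.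
  by apply: connect_trans (fconnect_iter _ e' x); rewrite fconnect_sym ?fconnect_iter //;
    exact: word_aut_inj.
rewrite card_preimset; last exact: perm_inj.
apply: leq_trans (card_fiber_orbit _ _ _) _.
case: L L_gt0 {psi fiber} => // L _.
exact/order_le_max_order/word_perm_section_in_A.
Qed.

Lemma card_bad_set j L (ws : seq (gen j)) :
  0 < L -> #|bad_set L ws| <= (size ws).+1 ^ 2 * max_order rhoQ rhoG (lev j L).
Proof.
move=> L_gt0; set r := size ws.
pose S (ii : 'I_r.+1 * 'I_r.+1) := [set y | `[< exists x e e',
  word_aut (drop ii.1 ws) L.+1 (iter e (word_aut ws L.+1) x) = oword o L.+1 j /\
  word_aut (drop ii.2 ws) L.+1 (iter e' (word_aut ws L.+1) x) = wrcons (oword o L j) y >]].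
have bad_sub : bad_set L ws \subset \bigcup_ii S ii.
  apply/subsetP => y; rewrite inE => /asboolP[x [[e [i [i_le x_o]]] [e' [i' [i'_le x_y]]]]].
  apply/bigcupP; exists (Ordinal (i_le : i < r.+1), Ordinal (i'_le : i' < r.+1)) => //.
  by rewrite inE; apply/asboolP; exists x, e, e'.
apply: leq_trans (subset_leq_card bad_sub) (leq_trans (card_bigcup_leq _) _).
apply: (@leq_trans (\sum_(ii : 'I_r.+1 * 'I_r.+1) max_order rhoQ rhoG (lev j L))).
  by apply: leq_sum => ii _; exact: card_linked.
by rewrite sum_nat_const card_prod card_ord mulnn.
Qed.

Variables (sQ : seq Q) (sG : seq G).

Local Notation letter j := (({perm X j} + (nat * bool)) + (nat * bool))%type.

(* Countable codes for the generators of [Gamma]: a rooted permutation, or a generator of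
   [Q] or of [G] given by its index in [sQ] or [sG] and a flag for inversion. *)
Definition decode j (c : letter j) : gen j :=
  match c with
  | inl (inl a) => GenRoot a
  | inl (inr ib) => GenQ (gword_letter sQ ib)
  | inr ib => GenG (gword_letter sG ib)
  end.

Definition letter_inv j (c : letter j) : letter j :=
  match c with
  | inl (inl a) => inl (inl a^-1%g)
  | inl (inr ib) => inl (inr (flip_letter ib))
  | inr ib => inr (flip_letter ib)
  end.

Lemma decode_inv j (c : letter j) :
  decode (letter_inv c) = gen_inv (decode c).
Proof. by case: c => [[a|ib]|ib] //=; rewrite gword_letter_flip. Qed.

Lemma word_aut_gwordQ j ls :
  word_aut [seq GenQ (gword_letter sQ ib) | ib <- ls] = qtilde rhoQ o alpha (gword sQ ls) j.
Proof. by elim: ls => [|ib ls IHls] /=; rewrite ?qtilde1 // IHls qtildeM. Qed.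

Lemma word_aut_gwordG j ls :
  word_aut [seq GenG (gword_letter sG ib) | ib <- ls] = gtilde rhoG o beta (gword sG ls) j.
Proof. by elim: ls => [|ib ls IHls] /=; rewrite ?gtilde1 // IHls gtildeM. Qed.

Hypothesis sQ_gen : forall q, ggen (fun y => y \in sQ) q.
Hypothesis sG_gen : forall g, ggen (fun y => y \in sG) g.

Lemma Gamma_word_aut j f : Gamma rhoQ rhoG o alpha beta j f ->
  exists ls, f = word_aut [seq decode c | c <- ls].
Proof.
elim=> [g [[a [_ ->]] | [[q ->] | [g' ->]]] | | g h _ [ls ->] _ [ls' ->] | g _ [ls ->]].
- by exists [:: inl (inl a)]; apply: aut_ext.
- have [ls ->] := ggen_gword (sQ_gen q).
  by exists [seq inl (inr ib) | ib <- ls]; rewrite -map_comp -word_aut_gwordQ.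
- have [ls ->] := ggen_gword (sG_gen g').
  by exists [seq inr ib | ib <- ls]; rewrite -map_comp -word_aut_gwordG.
- by exists [::].
- by exists (ls ++ ls'); rewrite map_cat; apply: aut_ext => l w; rewrite word_aut_cat.
- exists (rev [seq letter_inv c | c <- ls]); rewrite ainv_word_aut /word_inv map_rev.
  by rewrite -!map_comp; congr (word_aut (rev _)); apply: eq_map => c; rewrite /= decode_inv.
Qed.

End Generators.
Arguments word_aut {Q G X} rhoQ rhoG o alpha beta {j} ws l _.

(** * The construction of shrinking pairs *)

Section Locality.

Variables (Q G : groupType) (X : nat -> finType).
Variables (rhoQ : forall n, Q -> {perm X n}) (rhoG : forall n, G -> {perm X n}).
Variables (o al be al' be' : forall n, X n) (j L : nat).
Hypothesis agree : forall i, i < j + L -> al i = al' i /\ be i = be' i.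

Lemma word_aut_local (ws : seq (gen Q G X j)) :
  word_aut rhoQ rhoG o al be ws L.+1 = word_aut rhoQ rhoG o al' be' ws L.+1.
Proof.
apply: functional_extensionality_dep => w; elim: ws w => [|s ws IHws] w //=.
rewrite /amul IHws; case: s => [a|q|g]; first by [].
all: rewrite /gen_aut /qtilde /gtilde /tilde.
all: by apply: (@tilde_rec_local X o _ _ _ L.+1 j) => i; rewrite addnS ltnS => /agree[].
Qed.

Lemma bad_set_local (ws : seq (gen Q G X j)) :
  bad_set rhoQ rhoG o al be L ws = bad_set rhoQ rhoG o al' be' L ws.
Proof.
have E := word_aut_local.
have visitsE (x v : word X j L.+1) :
    visits rhoQ rhoG o al be ws x v <-> visits rhoQ rhoG o al' be' ws x v.
  split=> -[e [i [i_le x_v]]]; exists e, i; split=> //; first by rewrite -!E.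
  by rewrite !E.
by apply/setP => y; rewrite !inE; apply/asboolP/asboolP => -[x [x_o x_y]];
  exists x; split; apply/visitsE.
Qed.

End Locality.

Section Density.

Variables (Q G : groupType) (X : nat -> finType).
Variables (rhoQ : forall n, Q -> {perm X n}) (rhoG : forall n, G -> {perm X n}).
Variable o : forall n, X n.
Hypothesis rhoQ_action : forall n, is_left_action (rhoQ n).
Hypothesis rhoG_action : forall n, is_left_action (rhoG n).
Variables (sQ : seq Q) (sG : seq G).
Variables (Y Y' : forall i, {set X i}).
Hypothesis YY'_disj : forall i, [disjoint Y i & Y' i].
Hypothesis growth : forall n, exists j,
  n * max_order rhoQ rhoG j * (#|Y j| + #|Y' j|) < #|Y j| * #|Y' j|.

Definition in_YY' n (p : X n * X n) : Prop := p.1 \in Y n /\ p.2 \in Y' n.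
Arguments in_YY' : clear implicits.

Lemma in_YY'_neq n p : in_YY' n p -> p.1 != p.2.
Proof.
by case=> p1Y p2Y'; apply/eqP => p12; move: (disjointFr (YY'_disj n) p1Y); rewrite p12 p2Y'.
Qed.

Definition fst_seq (z : forall n, X n * X n) : forall n, X n := fun n => (z n).1.
Definition snd_seq (z : forall n, X n * X n) : forall n, X n := fun n => (z n).2.

Definition word_requirement (ls : seq (({perm X 0} + (nat * bool)) + (nat * bool)))
    (z : forall n, X n * X n) : Prop :=
  sections_shrink rhoQ rhoG o (fst_seq z) (snd_seq z)
    (word_aut rhoQ rhoG o (fst_seq z) (snd_seq z) [seq decode sQ sG c | c <- ls]).

Lemma word_requirement_extend ls M (z : forall n, X n * X n) :
  exists L, M < L /\ exists2 v : X L * X L, in_YY' L v &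
    forall z', (forall n, in_YY' n (z' n)) -> agree_below L z z' -> z' L = v ->
      word_requirement ls z'.
Proof.
set ws := [seq decode sQ sG c | c <- ls].
have [L M_lt grow] := growth_beyond (m := max_order rhoQ rhoG) (a := fun j => #|Y j|)
  (b := fun j => #|Y' j|) (max_order_gt0 rhoQ rhoG) growth ((size ws).+1 ^ 2) M.
have [cY cY'] := growth_split grow.
have L_gt0 : 0 < L by apply: leq_ltn_trans M_lt.
have bad_lt := card_bad_set o (fst_seq z) (snd_seq z) rhoQ_action rhoG_action ws L_gt0.
have cYL : (size ws).+1 ^ 2 * max_order rhoQ rhoG (lev 0 L) < #|Y (lev 0 L)|.
  by rewrite levE add0n.
have cY'L : (size ws).+1 ^ 2 * max_order rhoQ rhoG (lev 0 L) < #|Y' (lev 0 L)|.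
  by rewrite levE add0n.
have [y y_Y y_ok] := exists_notin_of_card (leq_ltn_trans bad_lt cYL).
have [y' y'_Y' y'_ok] := exists_notin_of_card (leq_ltn_trans bad_lt cY'L).
exists (lev 0 L); split; first by rewrite levE.
exists (y, y'); first by split.
move=> z' z'_in z_z' z'_L.
have agree i : i < 0 + L -> fst_seq z i = fst_seq z' i /\ snd_seq z i = snd_seq z' i.
  by rewrite -levE => /z_z'; rewrite /fst_seq /snd_seq => ->.
exists L.+1 => x; apply: word_shrinks_at => //.
- by move=> n; apply: in_YY'_neq.
- by rewrite /fst_seq z'_L -(bad_set_local rhoQ rhoG o agree).
- by rewrite /snd_seq z'_L -(bad_set_local rhoQ rhoG o agree).
Qed.

End Density.

Theorem proposition2p5
  (Q G : groupType) (X : nat -> finType)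
  (rhoQ : forall n, Q -> {perm X n}) (rhoG : forall n, G -> {perm X n})
  (o : forall n, X n)
  (hX : forall n, 1 < #|X n|)
  (hQact : forall n, is_left_action (rhoQ n))
  (hGact : forall n, is_left_action (rhoG n))
  (hA1Q : finitely_generated Q) (hA1G : finitely_generated G)
  (hA2 : perfect_group Q)
  (hA3t : forall n, [transitive An rhoQ rhoG n, on [set: X n] | 'P])
  (hA3g : forall n,
     An rhoQ rhoG n = (<< \bigcup_(g in Gn rhoG n) (Qn rhoQ n :^ g) >>)%g)
  (Y Y' : forall i, {set X i})
  (hYne : forall i, Y i != set0) (hY'ne : forall i, Y' i != set0)
  (hYo : forall i, o i \notin Y i) (hY'o : forall i, o i \notin Y' i)
  (hdisj : forall i, [disjoint Y i & Y' i])
  (hgrow : forall n : nat, exists j : nat,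
     n * max_order rhoQ rhoG j * (#|Y j| + #|Y' j|) < #|Y j| * #|Y' j|) :
  forall (a0 b0 : forall i, X i),
    (forall i, a0 i \in Y i) -> (forall i, b0 i \in Y' i) ->
    forall N : nat,
      exists alpha beta : forall i, X i,
        (forall i, alpha i \in Y i) /\ (forall i, beta i \in Y' i) /\
        (forall i, i < N -> alpha i = a0 i /\ beta i = b0 i) /\
        shrinking rhoQ rhoG o alpha beta.
Proof.
move=> a0 b0 a0Y b0Y' N.
have [sQ sQ_gen] := hA1Q; have [sG sG_gen] := hA1G.
have [z [z_in z_a0b0 z_req]] :=
  diagonalization (z0 := fun n => (a0 n, b0 n)) (adm := @in_YY' _ Y Y') N
    (fun n => conj (a0Y n) (b0Y' n))
    (word_requirement_extend o hQact hGact sQ sG hdisj hgrow).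
exists (fst_seq z), (snd_seq z); split; [|split; [|split]].
- by move=> i; case: (z_in i).
- by move=> i; case: (z_in i).
- by move=> i i_lt; rewrite /fst_seq /snd_seq -z_a0b0.
split=> [n | gamma /(Gamma_word_aut hQact hGact sQ_gen sG_gen)[ls ->]].
  exact: in_YY'_neq hdisj _ _ (z_in n).
exact: z_req.
Qed.
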